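(* Assume that for every nonempty $T\subseteq\mathbb{S}$ and every $i\in T$, the equilibrium demand satisfies $\bar q_i(T)<1/2$. If some set maximizing $\overline{re}$ over nonempty subsets of $\mathbb{S}$ has cardinality $k^*\ge2$, then $\{1,2,\dots,k^*\}$ also maximizes $\overline{re}$ over nonempty subsets of $\mathbb{S}$.
   Context: Market model: sellers $\mathbb{S}=\{1,\dots,n\}$, product qualities $\theta_1\ge\dots\ge\theta_n\ge0$. For displayed set $S$ and prices $p_i\ge0$: $a_i=e^{\theta_i-p_i}$, MNL demand $q_i=a_i/(1+\sum_{j\in S}a_j)$; sellers in $S$ play the Bertrand game (seller $i$ chooses $p_i\ge0$ to maximize $p_iq_i$). $V:(0,\infty)\to(0,1)$: $V(x)=$ the unique $v\in(0,1)$ with $v\exp(v/(1-v))=x$. For nonempty $T$, $\bar q_0(T)\in(0,1)$ is the unique solution of $\sum_{i\in T}V(\bar q_0e^{\theta_i-1})=1-\bar q_0$, $\bar q_i(T)=V(\bar q_0(T)e^{\theta_i-1})$ are the equilibrium demands, and the equilibrium revenue is $\overline{re}(T)=\sum_{i\in T}\frac{\bar q_i(T)}{1-\bar q_i(T)}$. *)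

From Stdlib Require Import Reals Lra List ClassicalEpsilon.
Open Scope R_scope.

Definition Vfun (x : R) : R :=
  epsilon (inhabits 0) (fun v => 0 < v < 1 /\ v * exp (v / (1 - v)) = x).

Definition sumL (T : list nat) (f : nat -> R) : R :=
  fold_right (fun i acc => f i + acc) 0 T.

Definition q0bar (theta : nat -> R) (T : list nat) : R :=
  epsilon (inhabits 0)
    (fun q => 0 < q < 1 /\ sumL T (fun i => Vfun (q * exp (theta i - 1))) = 1 - q).

Definition qbar (theta : nat -> R) (T : list nat) (i : nat) : R :=
  Vfun (q0bar theta T * exp (theta i - 1)).

Definition rebar (theta : nat -> R) (T : list nat) : R :=
  sumL T (fun i => qbar theta T i / (1 - qbar theta T i)).

(* Nonempty subsets of {1..n}, represented as duplicate-free nonempty lists. *)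
Definition nonempty_subset (n : nat) (T : list nat) : Prop :=
  NoDup T /\ T <> nil /\ (forall i, In i T -> (1 <= i <= n)%nat).

Definition is_maximizer (n : nat) (theta : nat -> R) (T : list nat) : Prop :=
  nonempty_subset n T /\
  forall T', nonempty_subset n T' -> rebar theta T' <= rebar theta T.

(* Write A_i = e^{theta_i - 1} and, for a fixed set S and a no-purchase share
   x, q_i(x) = V(x A_i).  The no-purchase share of j :: S is the root x of
   Ptot_S(x) + q_j(x) = 1 with Ptot_S(x) = x + sum_S q_i(x), and the revenue
   of j :: S is Grev_S(x) = sum_S g(q_i(x)) + g(1 - Ptot_S(x)), g(q) = q/(1-q).
   Since x q_i'(x) = elas(q_i) for an explicit elas, the derivative of Grev_S
   has the sign of Phi - 1 for an explicit aggregate Phi, and Phi is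
   nondecreasing while all q_i <= 1/2.  So Grev_S is single crossing on
   (0, q0bar S]; as adding a better seller lowers the no-purchase share, adding
   it is at least as good whenever adding a worse one did not hurt.  Finally a
   maximizer is moved to {1, ..., k} by such exchanges, each one strictly
   decreasing the sum of its indices. *)

From Stdlib Require Import Reals List Lra Lia Permutation ClassicalEpsilon Ranalysis5.
From Coquelicot Require Import Coquelicot.
Open Scope R_scope.

Lemma is_derive_continuity_pt f x l : is_derive f x l -> continuity_pt f x.
Proof.
  intros H. apply derivable_continuous_pt. exists l. now apply is_derive_Reals.
Qed.

Lemma is_derive_eq (f : R -> R) (x d1 d2 : R) : is_derive f x d1 -> d1 = d2 -> is_derive f x d2.
Proof. now intros H <-. Qed.

Lemma mean_value (f df : R -> R) a b : a < b ->
  (forall x, a <= x <= b -> is_derive f x (df x)) ->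
  exists c, a <= c <= b /\ f b - f a = df c * (b - a).
Proof.
  intros Hab Hd. destruct (MVT_gen f a b df) as [c [Hc E]].
  - intros x Hx. rewrite Rmin_left, Rmax_right in Hx by lra. apply Hd; lra.
  - intros x Hx. rewrite Rmin_left, Rmax_right in Hx by lra.
    eapply is_derive_continuity_pt, Hd; lra.
  - rewrite Rmin_left, Rmax_right in Hc by lra. now exists c.
Qed.

Definition vexp (v : R) : R := v * exp (v / (1 - v)).
Definition dvexp (v : R) : R := exp (v / (1 - v)) * (1 + v / (1 - v) ^ 2).

Lemma vexp_der v : v < 1 -> is_derive vexp v (dvexp v).
Proof.
  intros Hv. unfold vexp, dvexp. auto_derive.
  - lra.
  - replace (1 + - v) with (1 - v) by ring. unfold Rdiv.
    set (e := exp (v * / (1 - v))). field. lra.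
Qed.

Lemma dvexp_pos v : 0 <= v < 1 -> 0 < dvexp v.
Proof.
  intros H. unfold dvexp. apply Rmult_lt_0_compat; [apply exp_pos|].
  assert (0 <= v / (1 - v) ^ 2) by (apply Rdiv_le_0_compat; nra). lra.
Qed.

Lemma vexp_lt v w : 0 <= v -> v < w -> w < 1 -> vexp v < vexp w.
Proof.
  intros Hv Hvw Hw. unfold vexp.
  assert (v / (1 - v) < w / (1 - w)).
  { replace (v / (1 - v)) with (/ (1 - v) - 1) by (field; lra).
    replace (w / (1 - w)) with (/ (1 - w) - 1) by (field; lra).
    assert (/ (1 - v) < / (1 - w)) by (apply Rinv_lt_contravar; nra). lra. }
  assert (exp (v / (1 - v)) < exp (w / (1 - w))) by now apply exp_increasing.
  pose proof (exp_pos (v / (1 - v))). nra.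
Qed.

Lemma vexp_ge_id v : 0 <= v < 1 -> v <= vexp v.
Proof.
  intros H. unfold vexp.
  assert (0 <= v / (1 - v)) by (apply Rdiv_le_0_compat; lra).
  pose proof (exp_ineq1_le (v / (1 - v))). nra.
Qed.

Lemma vexp_le_3id v : 0 <= v <= 1/2 -> vexp v <= 3 * v.
Proof.
  intros H. unfold vexp.
  assert (v / (1 - v) <= 1).
  { apply Rmult_le_reg_r with (1 - v); [lra|]. field_simplify; lra. }
  assert (exp (v / (1 - v)) <= exp 1).
  { destruct (Req_dec (v / (1 - v)) 1) as [E|E]; [rewrite E; lra|].
    left. apply exp_increasing; lra. }
  pose proof exp_le_3. pose proof (exp_pos (v / (1 - v))). nra.
Qed.

(* vexp maps (0,1) onto (0,oo): intermediate value theorem between a small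
   point where vexp <= 3v and the point b with b/(1-b) = x. *)
Lemma vexp_onto x : 0 < x -> exists v, 0 < v < 1 /\ vexp v = x.
Proof.
  intros Hx.
  set (a := Rmin (1/4) (x / 4)). set (b := x / (1 + x)).
  assert (Ha : 0 < a) by (unfold a; apply Rmin_glb_lt; lra).
  assert (Ha2 : a <= 1/4) by apply Rmin_l.
  assert (Ha3 : a <= x/4) by apply Rmin_r.
  assert (Hb : 0 < b < 1).
  { unfold b. split; [apply Rdiv_lt_0_compat; lra|].
    apply Rmult_lt_reg_r with (1 + x); [lra|]. field_simplify; lra. }
  assert (Hfa : vexp a < x) by (pose proof (vexp_le_3id a); lra).
  assert (Hfb : x < vexp b).
  { assert (Eb : b / (1 - b) = x) by (unfold b; field; lra).
    unfold vexp. rewrite Eb. pose proof (exp_ineq1 x ltac:(lra)).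
    replace x with (b * (1 + x)) at 1 by (unfold b; field; lra). nra. }
  assert (Hab : a < b).
  { destruct (Rlt_or_le a b) as [|Hle]; auto. exfalso.
    destruct Hle as [Hlt|E]; [pose proof (vexp_lt b a ltac:(lra) Hlt ltac:(lra)); lra | rewrite E in Hfb; lra]. }
  destruct (IVT_interv (fun v => vexp v - x) a b) as [z [Hz Ez]]; try lra.
  - intros c Hc. apply continuity_pt_minus; [|apply continuity_pt_const; now intros u w].
    eapply is_derive_continuity_pt, vexp_der; lra.
  - exists z. split; lra.
Qed.

Lemma V_spec x : 0 < x -> 0 < Vfun x < 1 /\ vexp (Vfun x) = x.
Proof.
  intros Hx. unfold Vfun.
  apply (epsilon_spec (inhabits 0) (fun v => 0 < v < 1 /\ v * exp (v / (1 - v)) = x)).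
  now apply vexp_onto.
Qed.

Lemma V_le x y : 0 < x -> x <= y -> Vfun x <= Vfun y.
Proof.
  intros Hx Hxy. destruct (V_spec x Hx) as [Hvx Ex]. destruct (V_spec y ltac:(lra)) as [Hvy Ey].
  destruct (Rle_or_lt (Vfun x) (Vfun y)) as [|L]; auto.
  pose proof (vexp_lt (Vfun y) (Vfun x) ltac:(lra) L ltac:(lra)). lra.
Qed.

Lemma V_unique x v : 0 < v < 1 -> vexp v = x -> Vfun x = v.
Proof.
  intros Hv E. assert (Hx : 0 < x) by (pose proof (vexp_ge_id v); lra).
  destruct (V_spec x Hx) as [Hw Ew].
  destruct (Rtotal_order (Vfun x) v) as [L|[L|L]]; auto.
  - pose proof (vexp_lt (Vfun x) v ltac:(lra) L ltac:(lra)). lra.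
  - pose proof (vexp_lt v (Vfun x) ltac:(lra) L ltac:(lra)). lra.
Qed.

Lemma V_le_id x : 0 < x -> Vfun x <= x.
Proof. intros Hx. destruct (V_spec x Hx). pose proof (vexp_ge_id (Vfun x)). lra. Qed.

Lemma V_cont y : 0 < y -> continuity_pt Vfun y.
Proof.
  intros Hy. destruct (V_spec y Hy) as [Hv Hf].
  set (lb := Vfun y / 2). set (ub := (1 + Vfun y) / 2).
  assert (Hflb : 0 < vexp lb) by (pose proof (vexp_ge_id lb ltac:(unfold lb; lra)); unfold lb in *; lra).
  assert (E1 : Vfun (vexp lb) = lb) by (apply V_unique; unfold lb; auto; lra).
  assert (E2 : Vfun (vexp ub) = ub) by (apply V_unique; unfold ub; auto; lra).
  apply (continuity_pt_recip_interv vexp Vfun lb ub).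
  - unfold lb, ub; lra.
  - intros a b Ha Hab Hb. apply vexp_lt; unfold lb, ub in *; lra.
  - intros x H1 H2. unfold comp, id. apply V_spec. lra.
  - intros x H1 H2. rewrite <- E1, <- E2. split; apply V_le; lra.
  - intros a Ha. eapply is_derive_continuity_pt, vexp_der. unfold ub in *; lra.
  - rewrite <- Hf. split; apply vexp_lt; unfold lb, ub; lra.
Qed.

Lemma V_der y : 0 < y -> is_derive Vfun y (1 / dvexp (Vfun y)).
Proof.
  intros Hy.
  destruct (V_spec (y/2) ltac:(lra)) as [Hlo _]. destruct (V_spec (2*y) ltac:(lra)) as [Hhi _].
  destruct (V_spec y Hy) as [Hv _].
  assert (Prf : forall a, Vfun (y/2) <= a <= Vfun (2*y) -> derivable_pt vexp a).
  { intros a Ha. exists (dvexp a). apply is_derive_Reals, vexp_der. lra. }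
  assert (Hin : Vfun (y/2) <= Vfun y <= Vfun (2*y)) by (split; apply V_le; lra).
  apply is_derive_Reals.
  pose proof (derivable_pt_lim_recip_interv vexp Vfun (y/2) (2*y) y Prf (V_cont y Hy)
    ltac:(lra) ltac:(lra) Hin) as L.
  assert (D : derive_pt vexp (Vfun y) (Prf (Vfun y) Hin) = dvexp (Vfun y)).
  { apply derive_pt_eq_0, is_derive_Reals, vexp_der. lra. }
  rewrite D in L. apply L.
  - intros x Hx. unfold comp, id. apply V_spec. lra.
  - pose proof (dvexp_pos (Vfun y)). lra.
Qed.

(* If q(x) = V(x a) then
   x q'(x) = elas q; gain q = q/(1-q) is a seller's equilibrium revenue and
   kap q = gain'(q) elas q. *)
Definition den (q : R) : R := 1 - q + q ^ 2.
Definition elas (q : R) : R := q * (1 - q) ^ 2 / den q.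
Definition delas (q : R) : R :=
  ((1 - 4*q + 3*q^2) * den q - (q - 2*q^2 + q^3) * (2*q - 1)) / den q ^ 2.
Definition gain (q : R) : R := q / (1 - q).
Definition dgain (q : R) : R := 1 / (1 - q) ^ 2.
Definition kap (q : R) : R := q / den q.
Definition dkap (q : R) : R := (1 - q ^ 2) / den q ^ 2.

Lemma den_pos q : 0 < den q.
Proof. unfold den. nra. Qed.

Lemma gain_der q : q <> 1 -> is_derive gain q (dgain q).
Proof. intros H. unfold gain, dgain. auto_derive; [lra|field; lra]. Qed.

Lemma kap_der q : is_derive kap q (dkap q).
Proof.
  pose proof (den_pos q). unfold kap, dkap, den in *. auto_derive; [lra|field; lra].
Qed.

Lemma elas_der q : is_derive elas q (delas q).
Proof.
  pose proof (den_pos q). unfold elas, delas, den in *. auto_derive; [lra|field; lra].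
Qed.

Lemma dgain_elas q : 0 < q < 1 -> dgain q * elas q = kap q.
Proof. intros. unfold dgain, elas, kap. pose proof (den_pos q). field. lra. Qed.

Lemma elas_nonneg q : 0 < q < 1 -> 0 <= elas q.
Proof.
  intros. unfold elas. pose proof (den_pos q).
  apply Rdiv_le_0_compat; [apply Rmult_le_pos; [lra|apply pow2_ge_0]|lra].
Qed.

Lemma kap_nonneg q : 0 < q < 1 -> 0 <= kap q.
Proof. intros. unfold kap. pose proof (den_pos q). apply Rdiv_le_0_compat; lra. Qed.

(* The three pointwise bounds behind the monotonicity of Phi below; the first
   two are where the hypothesis q <= 1/2 enters. *)
Lemma elas_ge q : 0 < q <= 1/2 -> q / 3 <= elas q.
Proof.
  intros Hq. pose proof (den_pos q).
  replace (elas q) with (q / 3 + q * (2 - q) * (1 - 2 * q) / (3 * den q))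
    by (unfold elas, den in *; field; lra).
  assert (0 <= q * (2 - q) * (1 - 2 * q) / (3 * den q)).
  { apply Rdiv_le_0_compat; [|lra]. apply Rmult_le_pos; [|lra]. apply Rmult_le_pos; lra. }
  lra.
Qed.

Lemma dkap_elas_ge q : 0 < q <= 1/2 -> kap q / 3 <= dkap q * elas q.
Proof.
  intros Hq. pose proof (den_pos q).
  replace (dkap q * elas q)
    with (kap q / 3 + q * (1 - 2*q) * (2*q^3 - 3*q^2 + 2) / (3 * den q ^ 3))
    by (unfold dkap, elas, kap, den in *; field; lra).
  assert (0 <= q * (1 - 2*q) * (2*q^3 - 3*q^2 + 2) / (3 * den q ^ 3)).
  { apply Rdiv_le_0_compat; [apply Rmult_le_pos; [apply Rmult_le_pos; lra|]; nra|].
    pose proof (pow_lt (den q) 3 H); lra. }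
  lra.
Qed.

Lemma delas_le q : 0 < q < 1 -> delas q <= 1.
Proof.
  intros Hq. pose proof (den_pos q).
  replace (delas q) with (1 - q * (2 - q) / den q ^ 2) by (unfold delas, den in *; field; lra).
  assert (0 <= q * (2 - q) / den q ^ 2) by (apply Rdiv_le_0_compat; [nra|apply (pow_lt (den q) 2 H)]).
  lra.
Qed.

Lemma V_scaled_der a x : 0 < a -> 0 < x ->
  is_derive (fun t => Vfun (t * a)) x (elas (Vfun (x * a)) / x).
Proof.
  intros Ha Hx. destruct (V_spec (x * a) ltac:(nra)) as [Hq Hf].
  eapply is_derive_eq.
  - apply (is_derive_comp Vfun (fun t => t * a) x); [apply V_der; nra|].
    auto_derive; auto.
  - set (q := Vfun (x * a)) in *. unfold vexp in Hf.
    unfold scal; simpl; unfold mult; simpl. unfold dvexp, elas, den.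
    set (e := exp (q / (1 - q))) in *. assert (0 < e) by apply exp_pos.
    replace a with (q * e / x) by (field_simplify; [rewrite Hf; field|]; lra).
    assert (0 < q / (1 - q) ^ 2) by (apply Rdiv_lt_0_compat; nra).
    field. repeat split; try lra; nra.
Qed.

Lemma sumL_cons i T f : sumL (i :: T) f = f i + sumL T f.
Proof. reflexivity. Qed.

Lemma sumL_ext T f g : (forall i, In i T -> f i = g i) -> sumL T f = sumL T g.
Proof.
  induction T as [|j T IH]; intros H; simpl; auto.
  rewrite H by (simpl; auto). rewrite IH; auto. intros; apply H; simpl; auto.
Qed.

Lemma sumL_le T f g : (forall i, In i T -> f i <= g i) -> sumL T f <= sumL T g.
Proof.
  induction T as [|j T IH]; intros H; simpl; [lra|].
  assert (f j <= g j) by (apply H; simpl; auto).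
  assert (sumL T f <= sumL T g) by (apply IH; intros; apply H; simpl; auto). lra.
Qed.

Lemma sumL_nonneg T f : (forall i, In i T -> 0 <= f i) -> 0 <= sumL T f.
Proof.
  induction T as [|j T IH]; intros H; simpl; [lra|].
  assert (0 <= f j) by (apply H; simpl; auto).
  assert (0 <= sumL T f) by (apply IH; intros; apply H; simpl; auto). lra.
Qed.

Lemma sumL_scal T c f : sumL T (fun i => c * f i) = c * sumL T f.
Proof. induction T as [|j T IH]; simpl; [ring|]. rewrite IH. ring. Qed.

Lemma sumL_perm T T' f : Permutation T T' -> sumL T f = sumL T' f.
Proof. intros P. induction P; simpl; lra. Qed.

Lemma sumL_der T (F : nat -> R -> R) (F' : nat -> R) x :
  (forall i, In i T -> is_derive (F i) x (F' i)) ->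
  is_derive (fun y => sumL T (fun i => F i y)) x (sumL T F').
Proof.
  induction T as [|j T IH]; intros H; simpl.
  - apply is_derive_Reals, derivable_pt_lim_const.
  - apply is_derive_Reals, derivable_pt_lim_plus; apply is_derive_Reals.
    + apply H; simpl; auto.
    + apply IH. intros; apply H; simpl; auto.
Qed.

Lemma pos_div_iff a b : 0 < b -> 0 < a / b <-> 0 < a.
Proof.
  intros Hb. split; intros H.
  - replace a with (a / b * b) by (field; lra). nra.
  - now apply Rdiv_lt_0_compat.
Qed.

Section Aggregates.

(* A fixed list S of sellers with positive weights A i (later e^{theta_i - 1}). *)
Variable S : list nat.
Variable A : nat -> R.
Hypothesis A_pos : forall i, 0 < A i.

(* Demand of seller i when the no-purchase share is x. *)
Definition dem (i : nat) (x : R) : R := Vfun (x * A i).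

(* Ptot x: total share of the outside option and of S.  By the elasticity
   identity, x Ptot'(x) = Htot x, x Htot'(x) = H1tot x and x Ktot'(x) = K1tot x. *)
Definition Ptot (x : R) : R := x + sumL S (fun i => dem i x).
Definition Htot (x : R) : R := x + sumL S (fun i => elas (dem i x)).
Definition Ktot (x : R) : R := sumL S (fun i => kap (dem i x)).
Definition H1tot (x : R) : R := x + sumL S (fun i => delas (dem i x) * elas (dem i x)).
Definition K1tot (x : R) : R := sumL S (fun i => dkap (dem i x) * elas (dem i x)).

(* Revenue of S together with one further seller whose demand is the missing
   share 1 - Ptot x; its derivative dGrev has the sign of Phi x - 1. *)
Definition Grev (x : R) : R := sumL S (fun i => gain (dem i x)) + gain (1 - Ptot x).
Definition dGrev (x : R) : R := (Ktot x - Htot x / (Ptot x * Ptot x)) / x.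
Definition Phi (x : R) : R := Ptot x * Ptot x * Ktot x / Htot x.
Definition dPhi (x : R) : R :=
  ((2 * Ptot x * (Htot x / x) * Ktot x + Ptot x * Ptot x * (K1tot x / x)) * Htot x
   - Ptot x * Ptot x * Ktot x * (H1tot x / x)) / Htot x ^ 2.

Lemma dem_bounds i x : 0 < x -> 0 < dem i x < 1.
Proof. intros. apply V_spec. pose proof (A_pos i). nra. Qed.

Lemma dem_le i x y : 0 < x -> x <= y -> dem i x <= dem i y.
Proof. intros. pose proof (A_pos i). apply V_le; nra. Qed.

Lemma sum_dem_der (phi dphi : R -> R) x : 0 < x ->
  (forall q, 0 < q < 1 -> is_derive phi q (dphi q)) ->
  is_derive (fun t => sumL S (fun i => phi (dem i t))) x
    (sumL S (fun i => dphi (dem i x) * elas (dem i x)) / x).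
Proof.
  intros Hx Hd. eapply is_derive_eq.
  - apply (sumL_der S (fun i t => phi (dem i t))
             (fun i => dphi (dem i x) * (elas (dem i x) / x))).
    intros i _. eapply is_derive_eq.
    + apply (is_derive_comp phi (fun t => dem i t) x).
      * apply Hd, dem_bounds, Hx.
      * apply V_scaled_der; auto.
    + unfold scal, dem; simpl; unfold mult; simpl. ring.
  - unfold Rdiv. rewrite Rmult_comm, <- sumL_scal. apply sumL_ext. intros; ring.
Qed.

Lemma Ptot_der x : 0 < x -> is_derive Ptot x (Htot x / x).
Proof.
  intros Hx. eapply is_derive_eq.
  - apply is_derive_Reals, derivable_pt_lim_plus; [apply derivable_pt_lim_id|].
    apply is_derive_Reals, (sum_dem_der (fun q => q) (fun _ => 1)); auto.
    intros; apply is_derive_Reals, derivable_pt_lim_id.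
  - unfold Htot. rewrite (sumL_ext S (fun i => 1 * elas (dem i x)) (fun i => elas (dem i x)))
      by (intros; ring).
    field. lra.
Qed.

Lemma Htot_der x : 0 < x -> is_derive Htot x (H1tot x / x).
Proof.
  intros Hx. eapply is_derive_eq.
  - apply is_derive_Reals, derivable_pt_lim_plus; [apply derivable_pt_lim_id|].
    apply is_derive_Reals, (sum_dem_der elas delas); auto. intros; apply elas_der.
  - unfold H1tot. field. lra.
Qed.

Lemma Ktot_der x : 0 < x -> is_derive Ktot x (K1tot x / x).
Proof. intros Hx. apply (sum_dem_der kap dkap); auto. intros; apply kap_der. Qed.

Lemma Ptot_pos x : 0 < x -> 0 < Ptot x.
Proof.
  intros Hx. unfold Ptot.
  assert (0 <= sumL S (fun i => dem i x)).
  { apply sumL_nonneg. intros. pose proof (dem_bounds i x Hx). lra. }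
  lra.
Qed.

Lemma Htot_pos x : 0 < x -> 0 < Htot x.
Proof.
  intros Hx. unfold Htot.
  assert (0 <= sumL S (fun i => elas (dem i x)))
    by (apply sumL_nonneg; intros; apply elas_nonneg, dem_bounds, Hx).
  lra.
Qed.

Lemma Ktot_nonneg x : 0 < x -> 0 <= Ktot x.
Proof. intros Hx. apply sumL_nonneg. intros. apply kap_nonneg, dem_bounds, Hx. Qed.

Lemma Ptot_lt x y : 0 < x -> x < y -> Ptot x < Ptot y.
Proof.
  intros Hx Hxy. unfold Ptot.
  assert (sumL S (fun i => dem i x) <= sumL S (fun i => dem i y))
    by (apply sumL_le; intros; apply dem_le; lra).
  lra.
Qed.

Lemma Ptot_le x y : 0 < x -> x <= y -> Ptot x <= Ptot y.
Proof. intros Hx [Hxy| ->]; [left; now apply Ptot_lt | lra]. Qed.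

(* gain' (q) * elas q = kap q turns the derivative of Grev into dGrev. *)
Lemma Grev_der x : 0 < x -> is_derive Grev x (dGrev x).
Proof.
  intros Hx. pose proof (Ptot_pos x Hx). pose proof (Htot_pos x Hx).
  eapply is_derive_eq.
  - apply is_derive_Reals, derivable_pt_lim_plus; apply is_derive_Reals.
    + apply (sum_dem_der gain dgain); auto. intros; apply gain_der; lra.
    + apply (is_derive_comp gain (fun t => 1 - Ptot t) x); [apply gain_der; lra|].
      apply is_derive_Reals, derivable_pt_lim_minus;
        [apply derivable_pt_lim_const | apply is_derive_Reals, Ptot_der, Hx].
  - unfold scal; simpl; unfold mult; simpl. unfold dGrev, Ktot.
    rewrite (sumL_ext S (fun i => dgain (dem i x) * elas (dem i x)) (fun i => kap (dem i x)))
      by (intros; apply dgain_elas, dem_bounds, Hx).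
    unfold dgain. field. repeat split; lra.
Qed.

Lemma Phi_der x : 0 < x -> is_derive Phi x (dPhi x).
Proof.
  intros Hx. pose proof (Htot_pos x Hx). eapply is_derive_eq.
  - unfold Phi. apply (is_derive_div (fun t => Ptot t * Ptot t * Ktot t) Htot);
      [|apply Htot_der, Hx|lra].
    apply is_derive_Reals, derivable_pt_lim_mult; [apply derivable_pt_lim_mult|];
      apply is_derive_Reals; auto using Ptot_der, Ktot_der.
  - unfold dPhi. field. lra.
Qed.

Lemma dGrev_pos_iff x : 0 < x -> 0 < dGrev x <-> 1 < Phi x.
Proof.
  intros Hx. pose proof (Ptot_pos x Hx). pose proof (Htot_pos x Hx).
  assert (E1 : dGrev x = (Ptot x * Ptot x * Ktot x - Htot x) / (Ptot x * Ptot x * x))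
    by (unfold dGrev; field; repeat split; lra).
  assert (E2 : Phi x - 1 = (Ptot x * Ptot x * Ktot x - Htot x) / Htot x)
    by (unfold Phi; field; lra).
  assert (0 < Ptot x * Ptot x * x) by (apply Rmult_lt_0_compat; nra).
  rewrite E1, pos_div_iff by lra.
  rewrite <- (pos_div_iff _ (Htot x)), <- E2 by lra. lra.
Qed.

Lemma dPhi_nonneg x : 0 < x -> (forall i, In i S -> dem i x <= 1/2) -> 0 <= dPhi x.
Proof.
  intros Hx Hh.
  pose proof (Ptot_pos x Hx) as HP. pose proof (Htot_pos x Hx) as HH.
  pose proof (Ktot_nonneg x Hx) as HK.
  set (P := Ptot x) in *. set (H := Htot x) in *. set (K := Ktot x) in *.
  assert (HK1 : K / 3 <= K1tot x).
  { unfold K, Ktot, K1tot. unfold Rdiv. rewrite Rmult_comm, <- sumL_scal.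
    apply sumL_le. intros i Hi. pose proof (dem_bounds i x Hx). pose proof (Hh i Hi).
    pose proof (dkap_elas_ge (dem i x)). lra. }
  assert (HH1 : H1tot x <= H).
  { unfold H, Htot, H1tot. apply Rplus_le_compat_l, sumL_le. intros i Hi.
    pose proof (dem_bounds i x Hx) as Hb.
    pose proof (delas_le _ Hb). pose proof (elas_nonneg _ Hb). nra. }
  assert (HPH : P / 3 <= H).
  { unfold P, H, Ptot, Htot.
    assert (sumL S (fun i => dem i x) / 3 <= sumL S (fun i => elas (dem i x))).
    { unfold Rdiv. rewrite Rmult_comm, <- sumL_scal. apply sumL_le. intros i Hi.
      pose proof (dem_bounds i x Hx). pose proof (Hh i Hi).
      pose proof (elas_ge (dem i x)). lra. }
    lra. }
  replace (dPhi x) with ((2 * P * H * H * K + P * P * K1tot x * H - P * P * K * H1tot x)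
                         / (x * H ^ 2)) by (unfold dPhi; fold P H K; field; lra).
  apply Rdiv_le_0_compat; [|apply Rmult_lt_0_compat; [lra|apply pow_lt; lra]].
  assert (P * P * (K / 3) * H <= P * P * K1tot x * H)
    by (apply Rmult_le_compat_r; [lra|]; apply Rmult_le_compat_l; nra).
  assert (P * P * K * H1tot x <= P * P * K * H) by (apply Rmult_le_compat_l; nra).
  assert (0 <= 2 * P * H * K * (H - P / 3)) by (repeat apply Rmult_le_pos; lra).
  nra.
Qed.

Lemma Phi_mono c d : 0 < c -> c <= d -> (forall i, In i S -> dem i d <= 1/2) ->
  Phi c <= Phi d.
Proof.
  intros Hc Hcd Hh. destruct (Req_dec c d) as [->|Hne]; [lra|].
  destruct (mean_value Phi dPhi c d ltac:(lra)) as [e [He Ee]].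
  { intros; apply Phi_der; lra. }
  assert (0 <= dPhi e).
  { apply dPhi_nonneg; [lra|]. intros i Hi.
    pose proof (dem_le i e d ltac:(lra) ltac:(lra)). pose proof (Hh i Hi). lra. }
  nra.
Qed.

(* Single crossing: on (0, X], once Grev starts increasing it keeps increasing.
   Hence if Grev does not increase from xj to X, it did not increase from xi to xj. *)
Lemma Grev_single_crossing xi xj X : 0 < xi -> xi <= xj -> xj < X ->
  (forall i, In i S -> dem i X <= 1/2) -> Grev X <= Grev xj -> Grev xj <= Grev xi.
Proof.
  intros Hxi Hij HjX Hh HG.
  destruct (Rle_or_lt (Grev xj) (Grev xi)) as [|Hlt]; auto. exfalso.
  assert (Hij' : xi < xj) by (destruct Hij as [|E]; [auto|rewrite E in Hlt; lra]).
  destruct (mean_value Grev dGrev xi xj Hij') as [c [Hc Ec]].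
  { intros; apply Grev_der; lra. }
  destruct (mean_value Grev dGrev xj X HjX) as [d [Hd Ed]].
  { intros; apply Grev_der; lra. }
  assert (0 < dGrev c) by nra.
  assert (1 < Phi c) by (apply dGrev_pos_iff; lra).
  assert (Phi c <= Phi d).
  { apply Phi_mono; try lra. intros i Hi.
    pose proof (dem_le i d X ltac:(lra) ltac:(lra)). pose proof (Hh i Hi). lra. }
  assert (0 < dGrev d) by (apply dGrev_pos_iff; lra).
  nra.
Qed.

End Aggregates.

Lemma Ptot_cons S A j x : Ptot (j :: S) A x = Ptot S A x + dem A j x.
Proof. unfold Ptot. rewrite sumL_cons. ring. Qed.

Definition weight (theta : nat -> R) (i : nat) : R := exp (theta i - 1).

Lemma weight_pos theta i : 0 < weight theta i.
Proof. apply exp_pos. Qed.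

(* q0bar is well defined: Ptot T - 1 changes sign on (0,1), since demands
   are at most x A_i for small x and the first seller alone fills the
   market near x = 1. *)
Lemma q0_exists theta T : T <> nil ->
  exists q, 0 < q < 1 /\ sumL T (fun i => Vfun (q * exp (theta i - 1))) = 1 - q.
Proof.
  intros HT. set (A := weight theta). pose proof (weight_pos theta) as HA. fold A in HA.
  destruct T as [|j T']; [congruence|]. set (T := j :: T').
  set (sA := sumL T A).
  assert (HsA : 0 <= sA) by (apply sumL_nonneg; intros; left; auto).
  set (lo := 1 / (2 * (1 + sA))).
  assert (Hlo : 0 < lo) by (unfold lo; apply Rdiv_lt_0_compat; lra).
  assert (Hlo2 : lo <= 1/2).
  { unfold lo. apply Rmult_le_reg_r with (2 * (1 + sA)); [lra|]. field_simplify; lra. }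
  set (c := Vfun (A j / 2)).
  assert (Hc : 0 < c < 1) by (apply V_spec; pose proof (HA j); lra).
  set (m := Rmin (1/2) c).
  assert (Hm : 0 < m <= 1/2) by (unfold m; split; [apply Rmin_glb_lt; lra| apply Rmin_l]).
  assert (Hmc : m <= c) by apply Rmin_r.
  set (hi := 1 - m / 2).
  assert (P_lo : Ptot T A lo < 1).
  { unfold Ptot. assert (sumL T (fun i => dem A i lo) <= sumL T (fun i => lo * A i)).
    { apply sumL_le. intros. unfold dem. pose proof (HA i). apply V_le_id. nra. }
    rewrite sumL_scal in H. fold sA in H.
    assert (lo * (1 + sA) = 1/2) by (unfold lo; field; lra). nra. }
  assert (P_hi : 1 < Ptot T A hi).
  { unfold Ptot, T. rewrite sumL_cons.
    assert (0 <= sumL T' (fun i => dem A i hi)).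
    { apply sumL_nonneg. intros. pose proof (dem_bounds A HA i hi ltac:(unfold hi; lra)). lra. }
    assert (c <= dem A j hi).
    { unfold c, dem. pose proof (HA j). apply V_le; [lra|]. unfold hi. nra. }
    unfold hi in *. lra. }
  destruct (IVT_interv (fun q => Ptot T A q - 1) lo hi) as [z [Hz Ez]]; try lra; try (unfold hi; lra).
  - intros a Ha. apply continuity_pt_minus; [|apply continuity_pt_const; now intros u w].
    eapply is_derive_continuity_pt, Ptot_der; auto. lra.
  - exists z. split; [unfold hi in *; lra|]. unfold Ptot, dem, A, weight in Ez. lra.
Qed.

Lemma q0_spec theta T : T <> nil ->
  0 < q0bar theta T < 1 /\ Ptot T (weight theta) (q0bar theta T) = 1.
Proof.
  intros HT. unfold q0bar.
  destruct (epsilon_spec (inhabits 0) (fun q => 0 < q < 1 /\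
      sumL T (fun i => Vfun (q * exp (theta i - 1))) = 1 - q) (q0_exists theta T HT))
    as [Hq E].
  split; [exact Hq|]. unfold Ptot, dem, weight. lra.
Qed.

(* q0bar T is the unique root of Ptot T = 1, as Ptot T is increasing. *)
Lemma q0_unique theta T q : T <> nil -> 0 < q -> Ptot T (weight theta) q = 1 ->
  q0bar theta T = q.
Proof.
  intros HT Hq E. destruct (q0_spec theta T HT) as [H1 E1].
  pose proof (weight_pos theta) as HA.
  destruct (Rtotal_order q (q0bar theta T)) as [L|[L|L]]; auto.
  - pose proof (Ptot_lt T _ HA q (q0bar theta T) Hq L). lra.
  - pose proof (Ptot_lt T _ HA (q0bar theta T) q ltac:(lra) L). lra.
Qed.

Lemma q0_perm theta T T' : T <> nil -> Permutation T T' -> q0bar theta T' = q0bar theta T.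
Proof.
  intros HT P. assert (HT' : T' <> nil).
  { intros ->. apply Permutation_sym, Permutation_nil in P. congruence. }
  destruct (q0_spec theta T HT) as [Hq E].
  apply q0_unique; [auto|lra|]. unfold Ptot in *. now rewrite <- (sumL_perm T T').
Qed.

Lemma rebar_perm theta T T' : T <> nil -> Permutation T T' -> rebar theta T' = rebar theta T.
Proof.
  intros HT P. unfold rebar, qbar. rewrite (q0_perm theta T T' HT P).
  symmetry. now apply sumL_perm.
Qed.

(* Revenue of S as a value of Grev: the missing share at q0bar S is zero. *)
Lemma rebar_Grev theta S : S <> nil ->
  rebar theta S = Grev S (weight theta) (q0bar theta S).
Proof.
  intros HS. destruct (q0_spec theta S HS) as [_ E].
  unfold Grev. rewrite E. replace (gain (1 - 1)) with 0 by (unfold gain; field).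
  rewrite Rplus_0_r. reflexivity.
Qed.

(* Revenue of j :: S as a value of Grev S: seller j takes the missing share. *)
Lemma rebar_Grev_cons theta S j :
  rebar theta (j :: S) = Grev S (weight theta) (q0bar theta (j :: S)).
Proof.
  destruct (q0_spec theta (j :: S) ltac:(congruence)) as [_ E].
  unfold rebar, Grev. rewrite sumL_cons, Rplus_comm. f_equal.
  unfold Ptot in *. rewrite sumL_cons in E. unfold qbar, gain, dem, weight in *.
  f_equal; f_equal; lra.
Qed.

(* With
   X = q0bar S, xj = q0bar (j :: S) and xi = q0bar (i :: S) one has
   xi <= xj < X, and Grev S does not decrease on [xj, X]. *)
Lemma exchange_better theta S j i : S <> nil ->
  (forall k, In k S -> qbar theta S k < 1/2) -> theta j <= theta i ->
  rebar theta S <= rebar theta (j :: S) -> rebar theta (j :: S) <= rebar theta (i :: S).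
Proof.
  intros HS Hh Hth Hle.
  set (A := weight theta). pose proof (weight_pos theta) as HA. fold A in HA.
  set (X := q0bar theta S). set (xj := q0bar theta (j :: S)). set (xi := q0bar theta (i :: S)).
  destruct (q0_spec theta S HS) as [HX PX].
  destruct (q0_spec theta (j :: S) ltac:(congruence)) as [Hxj Pj].
  destruct (q0_spec theta (i :: S) ltac:(congruence)) as [Hxi Pi].
  fold A X xj xi in PX, Pj, Pi, HX, Hxj, Hxi. rewrite Ptot_cons in Pj, Pi.
  assert (Hwt : A j <= A i).
  { unfold A, weight. destruct Hth as [Hlt|E]; [left; apply exp_increasing; lra|rewrite E; lra]. }
  assert (HjX : xj < X).
  { destruct (Rlt_or_le xj X) as [|L]; auto.
    pose proof (Ptot_le S A HA X xj ltac:(lra) L). pose proof (dem_bounds A HA j xj ltac:(lra)).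
    lra. }
  assert (Hij : xi <= xj).
  { destruct (Rle_or_lt xi xj) as [|L]; auto.
    pose proof (Ptot_lt S A HA xj xi ltac:(lra) L).
    assert (dem A j xj <= dem A i xi).
    { unfold dem. pose proof (HA j). apply V_le; [nra|]. apply Rmult_le_compat; lra. }
    lra. }
  rewrite rebar_Grev_cons, rebar_Grev in Hle by exact HS.
  rewrite !rebar_Grev_cons. fold A X xj xi in Hle |- *.
  apply (Grev_single_crossing S A HA xi xj X); try lra.
  intros k Hk. left. apply (Hh k Hk).
Qed.

Lemma theta_antitone n theta : (forall i, (1 <= i < n)%nat -> theta (S i) <= theta i) ->
  forall i j, (1 <= i)%nat -> (i <= j)%nat -> (j <= n)%nat -> theta j <= theta i.
Proof.
  intros Hm i j Hi Hij Hjn. induction Hij as [|j Hij IH]; [lra|].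
  assert (theta (S j) <= theta j) by (apply Hm; lia).
  assert (theta j <= theta i) by (apply IH; lia). lra.
Qed.

Lemma missing_index (T : list nat) k j : NoDup T -> length T = k -> In j T -> (k < j)%nat ->
  exists i, (1 <= i <= k)%nat /\ ~ In i T.
Proof.
  intros HN HL HjT Hjk. apply NNPP. intro Hc.
  assert (Hinc : incl (j :: seq 1 k) T).
  { intros x [<-|Hx]; auto. apply in_seq in Hx. apply NNPP. intro Hx'. apply Hc.
    exists x. split; [lia|auto]. }
  assert (HND : NoDup (j :: seq 1 k)).
  { constructor; [rewrite in_seq; lia|apply seq_NoDup]. }
  pose proof (NoDup_incl_length HND Hinc). simpl in *. rewrite length_seq in *. lia.
Qed.

Section Exchange.

Variable n : nat.
Variable theta : nat -> R.
Hypothesis Hhalf : forall T, nonempty_subset n T -> forall i, In i T -> qbar theta T i < 1 / 2.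

Lemma exchange_maximizer l1 l2 j i :
  is_maximizer n theta (l1 ++ j :: l2) -> (2 <= length (l1 ++ j :: l2))%nat ->
  ~ In i (l1 ++ j :: l2) -> (1 <= i <= n)%nat -> theta j <= theta i ->
  is_maximizer n theta (i :: l1 ++ l2).
Proof.
  intros [[HN [Hne Hr]] Hopt] Hlen Hi Hin Hth.
  set (S := l1 ++ l2).
  assert (HNS : NoDup S) by (apply NoDup_remove_1 with j; auto).
  assert (HSsub : forall k, In k S -> In k (l1 ++ j :: l2)).
  { intros k Hk. apply in_app_or in Hk. apply in_or_app. simpl. tauto. }
  assert (HSne : S <> nil).
  { intro E. apply app_eq_nil in E as [-> ->]. simpl in Hlen. lia. }
  assert (HSsubset : nonempty_subset n S) by (split; [|split]; auto).
  assert (Hre : rebar theta (l1 ++ j :: l2) = rebar theta (j :: S))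
    by (apply rebar_perm; [congruence|apply Permutation_middle]).
  assert (Hsw : rebar theta (j :: S) <= rebar theta (i :: S)).
  { apply exchange_better; auto. rewrite <- Hre. now apply Hopt. }
  split.
  - split; [|split].
    + constructor; auto.
    + congruence.
    + intros k [<-|Hk]; auto.
  - intros T' HT'. specialize (Hopt T' HT'). fold S. lra.
Qed.

Lemma maximizer_in_prefix T k : is_maximizer n theta T -> length T = k ->
  (forall j, In j T -> (j <= k)%nat) -> is_maximizer n theta (seq 1 k).
Proof.
  intros [[HN [Hne Hr]] Hopt] HL Hk.
  assert (Hp : Permutation T (seq 1 k)).
  { apply NoDup_Permutation_bis; auto; [rewrite length_seq; lia|].
    intros x Hx. apply in_seq. specialize (Hr x Hx). specialize (Hk x Hx). lia. }
  split.
  - split; [apply seq_NoDup|split].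
    + destruct k; [destruct T; simpl in HL; congruence|]. simpl. congruence.
    + intros x Hx. apply Hr, (Permutation_in x (Permutation_sym Hp) Hx).
  - intros T' HT'. rewrite (rebar_perm theta T (seq 1 k)); auto.
Qed.

Hypothesis Hmono : forall i, (1 <= i < n)%nat -> theta (S i) <= theta i.

(* Induction on the sum of the indices: while a maximizer of size k >= 2 has
   an element j > k, exchange it for a missing i <= k, which has
   theta_i >= theta_j and strictly decreases the sum. *)
Lemma maximizer_to_prefix k : (2 <= k)%nat ->
  forall m T, (list_sum T < m)%nat -> is_maximizer n theta T -> length T = k ->
  is_maximizer n theta (seq 1 k).
Proof.
  intros Hk. induction m as [|m IH]; intros T Hm HT HL; [lia|].
  destruct (classic (exists j, In j T /\ (k < j)%nat)) as [[j [HjT Hjk]]|Hno].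
  - pose proof HT as [[HN [_ Hr]] _].
    destruct (missing_index T k j HN HL HjT Hjk) as [i [Hik HiT]].
    destruct (in_split j T HjT) as [l1 [l2 ->]].
    apply (IH (i :: l1 ++ l2)).
    + rewrite list_sum_app in Hm. simpl in *. rewrite list_sum_app. lia.
    + assert (Hjn : (j <= n)%nat) by (apply Hr, in_or_app; simpl; auto).
      apply exchange_maximizer with j; auto; try lia.
      apply (theta_antitone n theta Hmono); lia.
    + rewrite length_app in HL. simpl in *. rewrite length_app. lia.
  - apply (maximizer_in_prefix T k HT HL). intros j Hj.
    destruct (Nat.le_gt_cases j k) as [|Hgt]; auto. exfalso. apply Hno. eauto.
Qed.

End Exchange.

Theorem lemma6 (n : nat) (theta : nat -> R)
  (Hmono : forall i, (1 <= i < n)%nat -> theta (S i) <= theta i)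
  (Hnn : 0 <= theta n)
  (Hhalf : forall T, nonempty_subset n T ->
             forall i, In i T -> qbar theta T i < 1 / 2)
  (Tstar : list nat)
  (Hmax : is_maximizer n theta Tstar)
  (Hk : (2 <= length Tstar)%nat) :
  is_maximizer n theta (seq 1 (length Tstar)).
Proof.
  exact (maximizer_to_prefix n theta Hhalf Hmono (length Tstar) Hk
           (S (list_sum Tstar)) Tstar (Nat.lt_succ_diag_r _) Hmax eq_refl).
Qed.
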